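(* Let $h=(X,E,\mathit{in})$ be a flow graph over a flow monoid $\mathbb{M}$ and let $Y,Z\subseteq\mathbb{N}$. Then (i) $(h|_Y).\mathit{flow}=(h.\mathit{flow})|_{Y}$ (i.e. restricted to $X\cap Y$); (ii) $h|_Y\# h|_{X\setminus Y}$ and $h|_Y*h|_{X\setminus Y}=h$; (iii) $(h|_Y)|_Z=h|_{Y\cap Z}$.
   Context: A flow monoid is a commutative monoid $(\mathbb{M},+,0)$ such that $n\le m :\iff \exists o.\ m=n+o$ is a partial order in which every ascending chain $K$ has a least upper bound $\bigsqcup K$, and $n+\bigsqcup K=\bigsqcup(n+K)$. $\mathcal{C}(\mathbb{M}\to\mathbb{M})$ is the set of functions commuting with least upper bounds of ascending chains. Infinite sums denote least upper bounds of finite partial sums. A flow graph is $h=(X,E,\mathit{in})$ with $X\subseteq\mathbb{N}$ finite, $E:X\times\mathbb{N}\to\mathcal{C}(\mathbb{M}\to\mathbb{M})$, $\mathit{in}:(\mathbb{N}\setminus X)\times X\to\mathbb{M}$; $\mathit{in}_x=\sum_{y\in\mathbb{N}\setminus X}\mathit{in}(y,x)$; the flow $h.\mathit{flow}$ is the least $\mathit{flow}:X\to\mathbb{M}$ with $\mathit{flow}(x)=\mathit{in}_x+\sum_{y\in X}E(y,x)(\mathit{flow}(y))$; the outflow is $h.\mathit{out}(x,y)=E(x,y)(h.\mathit{flow}(x))$ for $x\in X$, $y\notin X$. Composition: $h_1\#\#h_2$ iff $X_1\cap X_2=\emptyset$ and for all $x\in X_1,y\in X_2$, $h_1.\mathit{out}(x,y)=h_2.\mathit{in}(x,y)$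 and $h_2.\mathit{out}(y,x)=h_1.\mathit{in}(y,x)$; $h_1\uplus h_2=(X_1\uplus X_2,E_1\uplus E_2,(\mathit{in}_1\uplus\mathit{in}_2)|_{(\mathbb{N}\setminus(X_1\uplus X_2))\times(X_1\uplus X_2)})$; $h_1\# h_2$ iff $h_1\#\#h_2$ and $h_1.\mathit{flow}\uplus h_2.\mathit{flow}=(h_1\uplus h_2).\mathit{flow}$, and then $h_1*h_2=h_1\uplus h_2$. Restriction: for $Y\subseteq\mathbb{N}$, $h|_Y=(X\cap Y,\ E|_{(X\cap Y)\times\mathbb{N}},\ \mathit{in}')$ where $\mathit{in}'(z,y)=\mathit{in}(z,y)$ for $z\in\mathbb{N}\setminus X$, $y\in X\cap Y$, and $\mathit{in}'(x,y)=E(x,y)(h.\mathit{flow}(x))$ for $x\in X\setminus Y$, $y\in X\cap Y$. *)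

From HB Require Import structures.
From mathcomp Require Import all_boot finmap.
From Stdlib Require Import ClassicalEpsilon.

Set Implicit Arguments.
Unset Strict Implicit.
Unset Printing Implicit Defensive.

Local Open Scope fset_scope.

Definition pre_le {T : Type} (add : T -> T -> T) (a b : T) : Prop :=
  exists o, b = add a o.

Definition pre_ascending {T : Type} (add : T -> T -> T) (c : nat -> T) : Prop :=
  forall i, pre_le add (c i) (c i.+1).

Definition pre_is_lub {T : Type} (add : T -> T -> T) (c : nat -> T) (l : T) : Prop :=
  (forall i, pre_le add (c i) l) /\
  (forall u, (forall i, pre_le add (c i) u) -> pre_le add l u).

Record flowMonoid := FlowMonoid {
  fm_car :> Type;
  fm_add : fm_car -> fm_car -> fm_car;
  fm_zero : fm_car;
  fm_addC : forall a b, fm_add a b = fm_add b a;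
  fm_addA : forall a b c, fm_add a (fm_add b c) = fm_add (fm_add a b) c;
  fm_add0 : forall a, fm_add fm_zero a = a;
  fm_le_antisym : forall a b, pre_le fm_add a b -> pre_le fm_add b a -> a = b;
  fm_lub_ex : forall c, pre_ascending fm_add c -> exists l, pre_is_lub fm_add c l;
  fm_add_lub : forall n c l, pre_ascending fm_add c -> pre_is_lub fm_add c l ->
                 pre_is_lub fm_add (fun i => fm_add n (c i)) (fm_add n l)
}.

Section FlowMonoidOps.
Variable M : flowMonoid.

Definition mle (a b : M) : Prop := pre_le (@fm_add M) a b.
Definition ascending (c : nat -> M) : Prop := pre_ascending (@fm_add M) c.
Definition is_lub (c : nat -> M) (l : M) : Prop := pre_is_lub (@fm_add M) c l.

Definition lub (c : nat -> M) : M :=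
  epsilon (inhabits (fm_zero M)) (is_lub c).

Definition continuous (f : M -> M) : Prop :=
  forall c l, ascending c -> is_lub c l -> is_lub (fun i => f (c i)) (f l).

Definition zerof : M -> M := fun _ => fm_zero M.

Definition sumM (s : seq nat) (F : nat -> M) : M :=
  foldr (fun y acc => fm_add (F y) acc) (fm_zero M) s.

End FlowMonoidOps.

Definition inb (Y : nat -> Prop) (x : nat) : bool :=
  if excluded_middle_informative (Y x) then true else false.

(* h = (X, E, in).  E and in are total functions; only their values on
   X x N, resp. (N \ X) x X are meaningful (see fg_wf). *)
Record flowGraph (M : flowMonoid) := FlowGraph {
  fg_X : {fset nat};
  fg_E : nat -> nat -> M -> M;
  fg_in : nat -> nat -> M
}.

Section FlowGraphs.
Variable M : flowMonoid.
Implicit Types h : flowGraph M.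

(* Well-formedness: E : X x N -> C(M -> M), in : (N\X) x X -> M, and the
   (meaningless) values outside these domains are normalised to 0. *)
Definition fg_wf h : Prop :=
  (forall x y, x \in fg_X h -> continuous (fg_E h x y)) /\
  (forall x y, x \notin fg_X h -> fg_E h x y = @zerof M) /\
  (forall z x, (z \in fg_X h) || (x \notin fg_X h) -> fg_in h z x = fm_zero M).

(* in_x = sum_{y in N \ X} in(y, x), as lub of the finite partial sums *)
Definition inflow h (x : nat) : M :=
  lub (fun n => sumM [seq y <- iota 0 n | y \notin fg_X h] (fun y => fg_in h y x)).

(* flow : X -> M, represented as nat -> M with value 0 outside X *)
Definition is_flow h (f : nat -> M) : Prop :=
  (forall x, x \notin fg_X h -> f x = fm_zero M) /\
  (forall x, x \in fg_X h ->
     f x = fm_add (inflow h x) (sumM (enum_fset (fg_X h)) (fun y => fg_E h y x (f y)))).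

Definition is_least_flow h (f : nat -> M) : Prop :=
  is_flow h f /\ forall g, is_flow h g -> forall x, x \in fg_X h -> mle (f x) (g x).

Definition flow h : nat -> M :=
  epsilon (inhabits (fun _ : nat => fm_zero M)) (is_least_flow h).

Definition outflow h (x y : nat) : M := fg_E h x y (flow h x).

Definition compat h1 h2 : Prop :=
  fg_X h1 `&` fg_X h2 = fset0 /\
  (forall x y, x \in fg_X h1 -> y \in fg_X h2 ->
     outflow h1 x y = fg_in h2 x y /\ outflow h2 y x = fg_in h1 y x).

Definition fg_union h1 h2 : flowGraph M :=
  let X := fg_X h1 `|` fg_X h2 in
  FlowGraph X
    (fun x y => if x \in fg_X h1 then fg_E h1 x y
                else if x \in fg_X h2 then fg_E h2 x y else @zerof M)
    (fun z x => if (x \in X) && (z \notin X) then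
                  (if x \in fg_X h1 then fg_in h1 z x else fg_in h2 z x)
                else fm_zero M).

Definition flow_union h1 h2 (f1 f2 : nat -> M) : nat -> M :=
  fun x => if x \in fg_X h1 then f1 x else if x \in fg_X h2 then f2 x else fm_zero M.

Definition fg_sep h1 h2 : Prop :=
  compat h1 h2 /\ flow_union h1 h2 (flow h1) (flow h2) = flow (fg_union h1 h2).

Definition fg_star h1 h2 : option (flowGraph M) :=
  if excluded_middle_informative (fg_sep h1 h2) then Some (fg_union h1 h2) else None.

Definition fcap (X : {fset nat}) (Y : nat -> Prop) : {fset nat} :=
  [fset x in X | inb Y x].

Definition restrict h (Y : nat -> Prop) : flowGraph M :=
  let X := fg_X h in
  let XY := fcap X Y in
  FlowGraph XY
    (fun x y => if x \in XY then fg_E h x y else @zerof M)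
    (fun z y => if (y \in XY) && (z \notin XY) then
                  (if z \notin X then fg_in h z y else fg_E h z y (flow h z))
                else fm_zero M).

Definition restrict_fun h (f : nat -> M) (Y : nat -> Prop) : nat -> M :=
  fun x => if x \in fcap (fg_X h) Y then f x else fm_zero M.

End FlowGraphs.

Definition setminus_X (X : {fset nat}) (Y : nat -> Prop) : nat -> Prop :=
  fun x => x \in X /\ ~ Y x.
Definition setI_N (Y Z : nat -> Prop) : nat -> Prop := fun x => Y x /\ Z x.

From HB Require Import structures.
From mathcomp Require Import all_boot finmap.
From Stdlib Require Import ClassicalEpsilon FunctionalExtensionality.

Set Implicit Arguments.
Unset Strict Implicit.
Unset Printing Implicit Defensive.

(* The flow of h is the least fixed point of the operator
     Phi g x = in_x + sum_(y in X) E(y,x)(g y),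
   which is monotone and preserves lubs of ascending chains since every E(y,x)
   does.  By Kleene's argument it is the lub of the iterates Phi^n(0), hence it
   lies below every prefixed point of Phi (Section Kleene).

   For the restriction h|_Y, the inflow of a node x of X∩Y is its external
   inflow plus the flow it receives from X \ Y (which enters h|_Y through in').
   Hence h.flow restricted to X∩Y is a flow of h|_Y, so h|_Y.flow <= h.flow;
   conversely h|_Y.flow, completed by h.flow outside Y, is a prefixed point of
   Phi_h, so h.flow <= h|_Y.flow (Section Restriction): this is part (i).
   Parts (ii) and (iii) are then bookkeeping: h|_Y ⊎ h|_(X\Y) is h itself, the
   outflow/inflow values between the two halves agree by (i), and a nested
   restriction restricts to the intersection of the index sets. *)

Lemma inbP (P : nat -> Prop) x : reflect (P x) (inb P x).
Proof. by rewrite /inb; case: excluded_middle_informative => H; [left | right]. Qed.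

Lemma mem_fcap (X : {fset nat}) Y x : (x \in fcap X Y) = (x \in X) && inb Y x.
Proof. by rewrite /fcap !inE. Qed.

Lemma inb_setminus (X : {fset nat}) Y x :
  x \in X -> inb (setminus_X X Y) x = ~~ inb Y x.
Proof.
move=> xX; apply/inbP/idP => [[_ nY] | nY]; first by apply/inbP.
by split=> // /inbP; apply/negP.
Qed.

Lemma inb_setI Y Z x : inb (setI_N Y Z) x = inb Y x && inb Z x.
Proof. by apply/inbP/andP => -[/inbP Yx /inbP Zx]; [split | split]. Qed.

Section FlowMonoidTheory.
Variable M : flowMonoid.
Local Notation "a +m b" := (@fm_add M a b) (at level 50, left associativity).
Local Notation m0 := (fm_zero M).
Local Notation madd := (@fm_add M).
Implicit Types (c d : nat -> M) (a b l m : M).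

HB.instance Definition _ :=
  Monoid.isComLaw.Build (fm_car M) m0 madd (@fm_addA M) (@fm_addC M) (@fm_add0 M).

Lemma sumM_big s (F : nat -> M) : sumM s F = \big[madd/m0]_(y <- s) F y.
Proof. by elim: s => [|a s IH]; rewrite ?big_nil ?big_cons //= IH. Qed.

Lemma mle_refl a : mle a a.
Proof. by exists m0; rewrite Monoid.mulm1. Qed.

Lemma mle_trans a b l : mle a b -> mle b l -> mle a l.
Proof. by move=> [o ->] [p ->]; exists (o +m p); rewrite fm_addA. Qed.

Lemma mle0 a : mle m0 a.
Proof. by exists a; rewrite fm_add0. Qed.

Lemma mleD a b l m : mle a b -> mle l m -> mle (a +m l) (b +m m).
Proof. by move=> [o ->] [p ->]; exists (o +m p); rewrite Monoid.mulmACA. Qed.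

Lemma lub_uniq c l m : is_lub c l -> is_lub c m -> l = m.
Proof. by move=> [ubl leastl] [ubm leastm]; apply: fm_le_antisym; auto. Qed.

Lemma lubP c : ascending c -> is_lub c (lub c).
Proof. by move=> /fm_lub_ex ex; apply: (epsilon_spec (inhabits m0) (is_lub c) ex). Qed.

Lemma asc_le c i j : ascending c -> i <= j -> mle (c i) (c j).
Proof.
move=> ac /subnK <-; elim: (j - i) => [|k IH]; first exact: mle_refl.
exact: mle_trans IH (ac _).
Qed.

Lemma asc_const a : ascending (fun _ => a).
Proof. by move=> i; apply: mle_refl. Qed.

Lemma lub_const a : is_lub (fun _ => a) a.
Proof. by split=> [i | u ub]; [apply: mle_refl | apply: ub 0]. Qed.

(* Continuous functions are monotone (apply them to the chain a, b, b, ...). *)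
Lemma cont_mono f a b : continuous f -> mle a b -> mle (f a) (f b).
Proof.
move=> cf ab; pose c i := if i is 0 then a else b.
have ac : ascending c by case=> [|i] /=; [exact: ab | exact: mle_refl].
have lc : is_lub c b.
  by split=> [[|i] | u ub]; [exact: ab | exact: mle_refl | exact: ub 1].
exact: (cf c b ac lc).1 0.
Qed.

Lemma ascD c d : ascending c -> ascending d -> ascending (fun i => c i +m d i).
Proof. by move=> ac ad i; apply: mleD (ac i) (ad i). Qed.

(* The lub of a sum of two chains is the sum of their lubs; this uses the
   axiom n + lub K = lub (n + K) twice and a diagonal argument. *)
Lemma lubD c d l m : ascending c -> ascending d -> is_lub c l -> is_lub d m ->
  is_lub (fun i => c i +m d i) (l +m m).
Proof.
move=> ac ad lc ld; split=> [i | u ub]; first by apply: mleD; [apply: lc.1 | apply: ld.1].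
apply: (fm_add_lub l ad ld).2 => j; rewrite fm_addC.
apply: (fm_add_lub (d j) ac lc).2 => i; rewrite fm_addC.
apply: mle_trans (ub (maxn i j)).
by apply: mleD; apply: asc_le; rewrite ?leq_maxl ?leq_maxr.
Qed.

Lemma lub_shift c N l : ascending c -> is_lub c l <-> is_lub (fun n => c (n + N)) l.
Proof.
move=> ac; split=> [[ub least] | [ub least]]; split=> [i | u ubu].
- exact: ub.
- by apply: least => i; apply: mle_trans (ubu i); apply: asc_le; rewrite ?leq_addr.
- by apply: mle_trans (ub i); apply: asc_le; rewrite ?leq_addr.
- by apply: least => i; apply: ubu.
Qed.

Lemma big_mle (s : seq nat) (P : pred nat) (F G : nat -> M) :
  (forall y, y \in s -> P y -> mle (F y) (G y)) ->
  mle (\big[madd/m0]_(y <- s | P y) F y) (\big[madd/m0]_(y <- s | P y) G y).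
Proof.
move=> FG; rewrite big_seq_cond [X in mle _ X]big_seq_cond.
elim/big_rec2: _ => [|y Gs Fs /andP[ys Py] le_FG]; first exact: mle_refl.
exact: mleD (FG y ys Py) le_FG.
Qed.

Lemma big_lub (s : seq nat) (F : nat -> nat -> M) (G : nat -> M) :
  (forall y, y \in s -> ascending (fun n => F n y)) ->
  (forall y, y \in s -> is_lub (fun n => F n y) (G y)) ->
  ascending (fun n => \big[madd/m0]_(y <- s) F n y) /\
  is_lub (fun n => \big[madd/m0]_(y <- s) F n y) (\big[madd/m0]_(y <- s) G y).
Proof.
elim: s => [|a s IH] asc lubs.
  rewrite big_nil; under [fun n => _]functional_extensionality do rewrite big_nil.
  by split; [apply: asc_const | apply: lub_const].
have [asc_s lub_s] : ascending (fun n => \big[madd/m0]_(y <- s) F n y) /\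
    is_lub (fun n => \big[madd/m0]_(y <- s) F n y) (\big[madd/m0]_(y <- s) G y).
  by apply: IH => y ys; [apply: asc | apply: lubs]; rewrite inE ys orbT.
have a_in : a \in a :: s by rewrite inE eqxx.
rewrite big_cons; under [fun n => _]functional_extensionality do rewrite big_cons.
by split; [apply: ascD (asc a a_in) asc_s | apply: lubD (asc a a_in) asc_s (lubs a a_in) lub_s].
Qed.

Lemma big_uniq_eq (s1 s2 : seq nat) (P Q : pred nat) (F : nat -> M) :
  uniq s1 -> uniq s2 -> (forall z, (z \in s1) && P z = (z \in s2) && Q z) ->
  \big[madd/m0]_(z <- s1 | P z) F z = \big[madd/m0]_(z <- s2 | Q z) F z.
Proof.
move=> u1 u2 same; rewrite -[LHS]big_filter -[RHS]big_filter; apply: perm_big.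
by apply: uniq_perm; rewrite ?filter_uniq // => z; rewrite !mem_filter andbC same andbC.
Qed.

Lemma psum_asc (p : pred nat) (F : nat -> M) :
  ascending (fun n => \big[madd/m0]_(z <- iota 0 n | p z) F z).
Proof. by move=> n; rewrite -addn1 iotaD add0n big_cat; eexists. Qed.

Section Kleene.
Variable h : flowGraph M.
Hypothesis hE : forall x y, x \in fg_X h -> continuous (fg_E h x y).
Local Notation X := (fg_X h).

Definition Phi (g : nat -> M) x :=
  inflow h x +m \big[madd/m0]_(y <- enum_fset X) fg_E h y x (g y).

Lemma Phi_mono g g' x :
  (forall y, y \in X -> mle (g y) (g' y)) -> mle (Phi g x) (Phi g' x).
Proof.
move=> le_gg'; apply: mleD; first exact: mle_refl.
by apply: big_mle => y yX _; apply: cont_mono; [apply: hE | apply: le_gg'].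
Qed.

Fixpoint kleene n : nat -> M :=
  if n is n'.+1 then fun x => if x \in X then Phi (kleene n') x else m0
  else fun _ => m0.

Lemma kleene_asc x : ascending (fun n => kleene n x).
Proof.
move=> n; elim: n x => [|n IH] x /=; first exact: mle0.
by case: (x \in X); [apply: Phi_mono => y _; apply: IH | apply: mle_refl].
Qed.

Definition kleene_lfp x := lub (fun n => kleene n x).

Lemma kleene_lfp_lub x : is_lub (fun n => kleene n x) (kleene_lfp x).
Proof. exact/lubP/kleene_asc. Qed.

Lemma kleene_lfp_out x : x \notin X -> kleene_lfp x = m0.
Proof.
move=> xX; apply: (lub_uniq (kleene_lfp_lub x)).
have -> : (fun n => kleene n x) = fun _ => m0.
  by apply: functional_extensionality => -[|n] //=; rewrite (negbTE xX).
exact: lub_const.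
Qed.

(* Continuity of Phi turns the lub of the iterates into a fixed point. *)
Lemma kleene_lfp_fix x : x \in X -> kleene_lfp x = Phi kleene_lfp x.
Proof.
move=> xX; have tail := (lub_shift 1 _ (kleene_asc x)).1 (kleene_lfp_lub x).
have shift : (fun n => kleene (n + 1) x) = fun n => Phi (kleene n) x.
  by apply: functional_extensionality => n; rewrite addn1 /= xX.
rewrite shift in tail.
have asc_E y : y \in X -> ascending (fun n => fg_E h y x (kleene n y)).
  by move=> yX n; apply: cont_mono; [apply: hE | apply: kleene_asc].
have lub_E y : y \in X ->
    is_lub (fun n => fg_E h y x (kleene n y)) (fg_E h y x (kleene_lfp y)).
  by move=> yX; apply: hE => //; [apply: kleene_asc | apply: kleene_lfp_lub].
have [asc_sum lub_sum] := big_lub asc_E lub_E.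
exact: lub_uniq tail (lubD (asc_const _) asc_sum (lub_const _) lub_sum).
Qed.

Lemma kleene_lfp_least g : (forall x, x \in X -> mle (Phi g x) (g x)) ->
  forall x, x \in X -> mle (kleene_lfp x) (g x).
Proof.
move=> pre; have below n x : x \in X -> mle (kleene n x) (g x).
  elim: n x => [|n IH] x xX /=; first exact: mle0.
  by rewrite xX; apply: mle_trans (pre x xX); apply: Phi_mono => y; apply: IH.
by move=> x xX; apply: (kleene_lfp_lub x).2 => n; apply: below.
Qed.

Lemma kleene_lfp_least_flow : is_least_flow h kleene_lfp.
Proof.
split; first by split=> [|x xX]; rewrite ?sumM_big; [apply: kleene_lfp_out | apply: kleene_lfp_fix].
move=> g [_ gflow]; apply: kleene_lfp_least => x xX.
by rewrite [g x]gflow // sumM_big; apply: mle_refl.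
Qed.

Lemma flow_least_flow : is_least_flow h (flow h).
Proof. exact: epsilon_spec (ex_intro _ _ kleene_lfp_least_flow). Qed.

Lemma flow_least_prefixed g : (forall x, x \in X -> mle (Phi g x) (g x)) ->
  forall x, x \in X -> mle (flow h x) (g x).
Proof.
move=> pre x xX; apply: mle_trans (kleene_lfp_least pre xX).
exact: flow_least_flow.2 _ kleene_lfp_least_flow.1 x xX.
Qed.

Lemma flow_out x : x \notin X -> flow h x = m0.
Proof. exact: flow_least_flow.1.1. Qed.

Lemma flow_eq x : x \in X -> flow h x = Phi (flow h) x.
Proof. by move=> xX; rewrite /Phi -sumM_big; apply: flow_least_flow.1.2. Qed.
End Kleene.

Section Restriction.
Variable h : flowGraph M.
Variable Y : nat -> Prop.
Hypothesis hwf : fg_wf h.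
Local Notation X := (fg_X h).
Local Notation XY := (fcap (fg_X h) Y).
Local Notation hY := (restrict h Y).

Lemma fcap_sub z : z \in XY -> z \in X.
Proof. by rewrite mem_fcap => /andP[]. Qed.

Lemma restrict_cont x y : x \in fg_X hY -> continuous (fg_E hY x y).
Proof. by move=> /= xXY; rewrite xXY; apply: hwf.1; apply: fcap_sub. Qed.

Lemma restrict_sum (f : nat -> M) x :
  \big[madd/m0]_(z <- enum_fset (fg_X hY)) fg_E hY z x (f z) =
  \big[madd/m0]_(z <- enum_fset X | z \in XY) fg_E h z x (f z).
Proof.
rewrite big_seq (eq_bigr (fun z => fg_E h z x (f z))) => [|z /= -> //].
apply: big_uniq_eq; rewrite ?fset_uniq // => z /=.
by case zXY: (z \in XY); rewrite ?andbF // (fcap_sub zXY).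
Qed.

Definition cut_inflow x :=
  \big[madd/m0]_(z <- enum_fset X | z \notin XY) fg_E h z x (flow h z).

Lemma Phi_split g x :
  Phi h g x = inflow h x +m
    \big[madd/m0]_(z <- enum_fset X | z \in XY) fg_E h z x (g z) +m
    \big[madd/m0]_(z <- enum_fset X | z \notin XY) fg_E h z x (g z).
Proof. by rewrite /Phi (bigID (fun z => z \in XY)) fm_addA. Qed.

(* Once n exceeds every node of X, the n-th partial inflow sum of h|_Y at y
   is that of h plus the cut inflow; so their lubs differ by cut_inflow y. *)
Lemma restrict_inflow y : y \in XY -> inflow hY y = inflow h y +m cut_inflow y.
Proof.
move=> yXY.
pose P n := \big[madd/m0]_(z <- iota 0 n | z \notin X) fg_in h z y.
pose PY n := \big[madd/m0]_(z <- iota 0 n | z \notin XY) fg_in hY z y.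
have -> : inflow h y = lub P.
  by congr lub; apply: functional_extensionality => n; rewrite sumM_big big_filter.
have -> : inflow hY y = lub PY.
  by congr lub; apply: functional_extensionality => n; rewrite sumM_big big_filter.
pose N := (\max_(z <- enum_fset X) z).+1.
have bigN n : N <= n -> PY n = P n +m cut_inflow y.
  move=> Nn; rewrite /PY (bigID (fun z => z \in X)) /= fm_addC; congr (_ +m _).
    apply: eq_big => [z | z /andP[zXY zX] /=]; last by rewrite yXY zXY zX.
    case zX: (z \in X); rewrite ?andbF // andbT.
    by apply/negP => /fcap_sub; rewrite zX.
  rewrite (eq_bigr (fun z => fg_E h z y (flow h z))) => [|z /andP[zXY zX] /=].
    apply: big_uniq_eq; rewrite ?fset_uniq ?iota_uniq // => z.
    case zX: (z \in X); rewrite ?andbF // andbT mem_iota add0n /=.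
    by rewrite (leq_trans _ Nn) // ltnS (leq_bigmax_seq (F := id)).
  by rewrite yXY zXY zX.
have ascP : ascending P by apply: psum_asc.
have ascPY : ascending PY by apply: psum_asc.
have lub_sum := lubD ascP (asc_const (cut_inflow y)) (lubP ascP) (lub_const _).
apply: (lub_uniq (lubP ascPY)); apply/(lub_shift N _ ascPY).
under [fun n => _]functional_extensionality do rewrite bigN ?leq_addl //.
exact: (lub_shift N _ (ascD ascP (asc_const _))).1 lub_sum.
Qed.

Lemma restrict_fun_is_flow : is_flow hY (restrict_fun h (flow h) Y).
Proof.
split=> [x /= xXY | x /= xXY]; first by rewrite /restrict_fun (negbTE xXY).
rewrite sumM_big restrict_sum restrict_inflow // /restrict_fun xXY.
rewrite flow_eq ?(fcap_sub xXY) //; last exact: hwf.1.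
rewrite Phi_split -!fm_addA (fm_addC (cut_inflow x)); congr (_ +m (_ +m _)).
by apply: eq_bigr => z zXY; rewrite zXY.
Qed.

Lemma flow_restrict_le x : x \in XY -> mle (flow hY x) (flow h x).
Proof.
move=> xXY; have := (flow_least_flow restrict_cont).2 _ restrict_fun_is_flow x xXY.
by rewrite /restrict_fun xXY.
Qed.

(* h|_Y.flow on X ∩ Y, completed by h.flow elsewhere, is a prefixed point of Phi_h. *)
Lemma flow_le_restrict x : x \in XY -> mle (flow h x) (flow hY x).
Proof.
move=> xXY; pose g z := if z \in XY then flow hY z else flow h z.
suff pre : forall y, y \in X -> mle (Phi h g y) (g y).
  by have := flow_least_prefixed hwf.1 pre (fcap_sub xXY); rewrite /g xXY.
move=> y yX; rewrite Phi_split.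
rewrite [X in _ +m X +m _](eq_bigr (fun w => fg_E h w y (flow hY w))); last first.
  by move=> w wXY; rewrite /g wXY.
rewrite [X in _ +m X](eq_bigr (fun w => fg_E h w y (flow h w))); last first.
  by move=> w wXY; rewrite /g (negbTE wXY).
rewrite -/(cut_inflow y) /g; case: ifP => yXY.
  rewrite [flow hY y](flow_eq restrict_cont) // /Phi restrict_sum restrict_inflow //.
  by rewrite -!fm_addA (fm_addC (cut_inflow y)); apply: mle_refl.
rewrite (flow_eq hwf.1) // Phi_split; apply: mleD (mleD (mle_refl _) _) (mle_refl _).
apply: big_mle => w _ wXY; apply: cont_mono (flow_restrict_le wXY).
by apply: hwf.1; apply: fcap_sub.
Qed.

Lemma flow_restrict : flow hY = restrict_fun h (flow h) Y.
Proof.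
apply: functional_extensionality => x; rewrite /restrict_fun.
case: ifP => xXY; last by rewrite (flow_out restrict_cont) ?xXY.
by apply: fm_le_antisym; [apply: flow_restrict_le | apply: flow_le_restrict].
Qed.

Lemma restrict_restrict Z : restrict hY Z = restrict h (setI_N Y Z).
Proof.
have eX : fcap XY Z = fcap X (setI_N Y Z).
  by apply/fsetP => x; rewrite !mem_fcap inb_setI andbA.
rewrite /restrict /= flow_restrict eX; congr FlowGraph.
  apply: functional_extensionality => x; apply: functional_extensionality => y.
  by rewrite !mem_fcap inb_setI; case: (x \in X); case: (inb Y x); case: (inb Z x).
apply: functional_extensionality => z; apply: functional_extensionality => y.
rewrite /restrict_fun !mem_fcap !inb_setI.
by case: (y \in X); case: (inb Y y); case: (inb Z y);
   case: (z \in X); case: (inb Y z); case: (inb Z z).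
Qed.
End Restriction.

Lemma fg_star_sep (h1 h2 : flowGraph M) :
  fg_sep h1 h2 -> fg_star h1 h2 = Some (fg_union h1 h2).
Proof. by rewrite /fg_star => sep; case: excluded_middle_informative. Qed.

Section Decomposition.
Variable h : flowGraph M.
Variable Y : nat -> Prop.
Hypothesis hwf : fg_wf h.
Local Notation X := (fg_X h).
Local Notation hY := (restrict h Y).
Local Notation hC := (restrict h (setminus_X X Y)).

Lemma restrict_union : fg_union hY hC = h.
Proof.
move: hwf; case: h => X0 E inn [_ [E0 in0]] /=.
rewrite /fg_union /restrict /=; congr FlowGraph.
- apply/fsetP => x; rewrite !inE /=.
  by case xX: (x \in X0); rewrite //= inb_setminus //; case: inb.
- apply: functional_extensionality => x; apply: functional_extensionality => y.
  rewrite !mem_fcap; case xX: (x \in X0) => /=; last by move: (E0 x y) => /= ->; rewrite ?xX.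
  by rewrite inb_setminus //; case: inb.
apply: functional_extensionality => z; apply: functional_extensionality => x.
rewrite !inE; case xX: (x \in X0); case zX: (z \in X0);
  rewrite /= ?inb_setminus //; try case: (inb Y x); try case: (inb Y z) => /=;
  by [| symmetry; apply: in0; rewrite ?zX ?xX].
Qed.

(* By part (i), the outflow of one half is the inflow the other half sees. *)
Lemma restrict_compat : compat hY hC.
Proof.
split.
  apply/fsetP => x; rewrite !inE /=.
  by case xX: (x \in X); rewrite //= inb_setminus //; case: inb.
move=> x y /=; rewrite !mem_fcap => /andP[xX xY] /andP[yX yC].
rewrite inb_setminus // in yC.
rewrite /outflow !flow_restrict // /restrict_fun /= !mem_fcap !inb_setminus //.
by rewrite xX yX xY (negbTE yC).
Qed.

(* Since h|_Y ⊎ h|_(X\Y) = h, the glued flows are h.flow by part (i). *)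
Lemma restrict_sep : fg_sep hY hC.
Proof.
split; first exact: restrict_compat.
rewrite restrict_union; apply: functional_extensionality => x.
rewrite /flow_union !flow_restrict // /restrict_fun /= !mem_fcap.
case xX: (x \in X) => /=; last by rewrite (flow_out hwf.1) ?xX.
by rewrite inb_setminus //; case: inb.
Qed.
End Decomposition.
End FlowMonoidTheory.

Theorem lemma4 (M : flowMonoid) (h : flowGraph M) (Y Z : nat -> Prop) :
  fg_wf h ->
  flow (restrict h Y) = restrict_fun h (flow h) Y /\
  (fg_sep (restrict h Y) (restrict h (setminus_X (fg_X h) Y)) /\
   fg_star (restrict h Y) (restrict h (setminus_X (fg_X h) Y)) = Some h) /\
  restrict (restrict h Y) Z = restrict h (setI_N Y Z).
Proof.
move=> hwf; have sep := restrict_sep Y hwf.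
split; first exact: flow_restrict.
split; last exact: restrict_restrict.
by split=> //; rewrite fg_star_sep // restrict_union.
Qed.
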